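(* Under the setting below, with positive step sizes $\eta_t$, let $\lambda^*\in[0,\pi]$ minimize $\sum_{t=1}^TL_t(x_t^*,z_t^*,\lambda)$ over $\lambda\in[0,\pi]$. Then the shadow prices $\hat\lambda_t$ generated by strategy $\mathcal A$ satisfy $$G:=\sum_{t=1}^T\big[L_t(x^*_t,z^*_t,\lambda^* )-L_t(x^*_t,z^*_t,\hat\lambda_t)\big]\le\Xi\Psi\sum_{t=1}^T\eta_t.$$
   Context: Fix an integer $T\ge 1$, a data cap $Q>0$ and an overage fee $\pi>0$; let $q=Q/T$. Fix constants $\bar d\ge 0$, $\bar r\ge 0$. For each $t\in\{1,\dots,T\}$ fix reals $d_t\in[0,\bar d]$, $r_t\in[0,\bar r]$, $c_t>0$, $p_t>0$, $\theta_t>0$, $\beta_t>0$ and functions $u_t,e_t:[0,\infty)\to\mathbb{R}$ such that: $u_t$ is continuous, increasing and strictly concave, differentiable on $(0,\infty)$, and $u_t':(0,\infty)\to(0,\infty)$ is a strictly decreasing bijection with inverse $u_t'^{-1}$; $e_t$ is increasing, strictly convex and continuously differentiable, and $e_t':[0,\infty)\to[0,\infty)$ is a strictly increasing bijection with inverse $e_t'^{-1}$. For $0\le z\le x\le 1$ let $\tilde f_t(x,z)=\theta_t u_t(x)-\beta_t e_t((x-z)c_t)-p_t c_t z$ and $\tilde h_t(x,z)=d_t x+r_t z$, and $L_t(x,z,\lambda)=\tilde f_t(x,z)-\lambda(\tilde h_t(x,z)-q)$. Define $\tilde S(x,z)=\sum_{t=1}^T\tilde f_t(x_t,z_t)-\pi\big[\sum_{t=1}^T\tilde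 h_t(x_t,z_t)-Q\big]^+$ and let $(x^*,z^* )$ be a maximizer of $\tilde S$ over $\{0\le z_t\le x_t\le 1\ \forall t\}$. For $\lambda\ge 0$ and $\beta>0$ write $a_t(\beta,\lambda)=\frac{1}{c_t}\,e_t'^{-1}\!\Big(\frac{p_tc_t+r_t\lambda}{\beta c_t}\Big)$ and $X_t(\lambda)=p_tc_t+(d_t+r_t)\lambda$. Define the sets (all with $\beta>0$): $\Omega^{I}_t(\lambda)=\{(\beta,\theta):\theta>\frac{\beta c_t e_t'(c_t)+d_t\lambda}{u_t'(1)},\ \beta<\frac{p_tc_t+r_t\lambda}{c_te_t'(c_t)}\}$; $\Omega^{II}_t(\lambda)=\{(\beta,\theta):\theta>\frac{X_t(\lambda)}{u_t'(1)},\ \beta\ge\frac{p_tc_t+r_t\lambda}{c_te_t'(c_t)}\}$; $\Omega^{III}_t(\lambda)=\{(\beta,\theta):\frac{X_t(\lambda)}{u_t'(a_t(\beta,\lambda))}\le\theta\le\frac{X_t(\lambda)}{u_t'(1)}\}$; $\Omega^{IV}_t(\lambda)=\{(\beta,\theta):\theta<\frac{X_t(\lambda)}{u_t'(a_t(\beta,\lambda))},\ \theta\le\frac{\beta c_te_t'(c_t)+d_t\lambda}{u_t'(1)}\}$. Let $z^{II}_t(\lambda)=1-a_t(\beta_t,\lambda)$, $x^{III}_t(\lambda)=u_t'^{-1}(X_t(\lambda)/\theta_t)$, $z^{III}_t(\lambda)=x^{III}_t(\lambda)-a_t(\beta_t,\lambda)$, and let $x^{IV}_t(\lambda)\in(0,1]$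 be the solution of $\theta_tu_t'(x)-\beta_tc_te_t'(xc_t)=d_t\lambda$. Define $W_t(\lambda)=(1,0)$ if $(\beta_t,\theta_t)\in\Omega^I_t(\lambda)$; $(1,z^{II}_t(\lambda))$ if in $\Omega^{II}_t(\lambda)$; $(x^{III}_t(\lambda),z^{III}_t(\lambda))$ if in $\Omega^{III}_t(\lambda)$; $(x^{IV}_t(\lambda),0)$ if in $\Omega^{IV}_t(\lambda)$. Online strategy $\mathcal A$: set $\hat\lambda_1=0$; for $t=1,\dots,T$ set $(\hat x_t,\hat z_t)=W_t(\hat\lambda_t)$ and $\hat\lambda_{t+1}=\mathcal P_{[0,\pi]}\big(\hat\lambda_t+\eta_t[\tilde h_t(\hat x_t,\hat z_t)-q]\big)$, where $\mathcal P_{[0,\pi]}$ is the projection onto $[0,\pi]$. Maximal demand divergence: $\Xi=\max(|q-\bar d-\bar r|,q)$. Consumption fluctuation: with $l_t=q-\tilde h_t(x_t^*,z_t^* )$, $\bar l=\frac1T\sum_{t=1}^Tl_t$, $\psi_t=|t\bar l-\sum_{i=1}^tl_i|$, set $\Psi=\max_{1\le t\le T}\psi_t$. *)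

From Stdlib Require Import Reals Lra Classical ClassicalEpsilon.
Open Scope R_scope.

Fixpoint sum1 (n : nat) (f : nat -> R) : R :=
  match n with O => 0 | S k => sum1 k f + f (S k) end.

(* max1 n f = max (f 1, ..., f n)  (n >= 1; max1 0 f = 0 by convention) *)
Fixpoint max1 (n : nat) (f : nat -> R) : R :=
  match n with
  | O => 0
  | S k => match k with O => f 1%nat | _ => Rmax (max1 k f) (f (S k)) end
  end.

(* The data of the problem. du/de are the derivatives u_t', e_t';
   duinv/deinv their inverses. *)
Record Data := mkData {
  T : nat; Q : R; piF : R; dbar : R; rbar : R;
  d : nat -> R; r : nat -> R; c : nat -> R; p : nat -> R;
  theta : nat -> R; beta : nat -> R;
  u : nat -> R -> R; e : nat -> R -> R;
  du : nat -> R -> R; de : nat -> R -> R;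
  duinv : nat -> R -> R; deinv : nat -> R -> R }.

Definition q (D : Data) : R := Q D / INR (T D).

Definition Assumptions (D : Data) : Prop :=
  (1 <= T D)%nat /\ 0 < Q D /\ 0 < piF D /\ 0 <= dbar D /\ 0 <= rbar D /\
  forall t, (1 <= t <= T D)%nat ->
    (0 <= d D t <= dbar D) /\ (0 <= r D t <= rbar D) /\
    0 < c D t /\ 0 < p D t /\ 0 < theta D t /\ 0 < beta D t /\
    (forall x, 0 <= x -> limit1_in (u D t) (fun y => 0 <= y) (u D t x) x) /\
    (forall x y, 0 <= x -> x <= y -> u D t x <= u D t y) /\
    (forall x y s, 0 <= x -> 0 <= y -> x <> y -> 0 < s < 1 ->
        s * u D t x + (1 - s) * u D t y < u D t (s * x + (1 - s) * y)) /\
    (forall x, 0 < x -> derivable_pt_lim (u D t) x (du D t x)) /\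
    (forall x, 0 < x -> 0 < du D t x) /\
    (forall x y, 0 < x -> x < y -> du D t y < du D t x) /\
    (forall y, 0 < y -> 0 < duinv D t y /\ du D t (duinv D t y) = y) /\
    (forall x, 0 < x -> duinv D t (du D t x) = x) /\
    (forall x y, 0 <= x -> x <= y -> e D t x <= e D t y) /\
    (forall x y s, 0 <= x -> 0 <= y -> x <> y -> 0 < s < 1 ->
        e D t (s * x + (1 - s) * y) < s * e D t x + (1 - s) * e D t y) /\
    (forall x, 0 <= x ->
        limit1_in (fun h => (e D t (x + h) - e D t x) / h)
                  (fun h => h <> 0 /\ 0 <= x + h) (de D t x) 0) /\
    (forall x, 0 <= x -> limit1_in (de D t) (fun y => 0 <= y) (de D t x) x) /\
    (forall x, 0 <= x -> 0 <= de D t x) /\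
    (forall x y, 0 <= x -> x < y -> de D t x < de D t y) /\
    (forall y, 0 <= y -> 0 <= deinv D t y /\ de D t (deinv D t y) = y) /\
    (forall x, 0 <= x -> deinv D t (de D t x) = x).

Definition ftil (D : Data) (t : nat) (x z : R) : R :=
  theta D t * u D t x - beta D t * e D t ((x - z) * c D t) - p D t * c D t * z.

Definition htil (D : Data) (t : nat) (x z : R) : R := d D t * x + r D t * z.

Definition Lag (D : Data) (t : nat) (x z lam : R) : R :=
  ftil D t x z - lam * (htil D t x z - q D).

Definition Stil (D : Data) (x z : nat -> R) : R :=
  sum1 (T D) (fun t => ftil D t (x t) (z t))
  - piF D * Rmax 0 (sum1 (T D) (fun t => htil D t (x t) (z t)) - Q D).

Definition feasible (D : Data) (x z : nat -> R) : Prop :=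
  forall t, (1 <= t <= T D)%nat -> 0 <= z t /\ z t <= x t /\ x t <= 1.

Definition is_maximizer (D : Data) (xs zs : nat -> R) : Prop :=
  feasible D xs zs /\
  forall x z, feasible D x z -> Stil D x z <= Stil D xs zs.

Definition a_ (D : Data) (t : nat) (b lam : R) : R :=
  / c D t * deinv D t ((p D t * c D t + r D t * lam) / (b * c D t)).

Definition X_ (D : Data) (t : nat) (lam : R) : R :=
  p D t * c D t + (d D t + r D t) * lam.

Definition OmegaI (D : Data) (t : nat) (lam b th : R) : Prop :=
  0 < b /\
  th > (b * c D t * de D t (c D t) + d D t * lam) / du D t 1 /\
  b < (p D t * c D t + r D t * lam) / (c D t * de D t (c D t)).

Definition OmegaII (D : Data) (t : nat) (lam b th : R) : Prop :=
  0 < b /\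
  th > X_ D t lam / du D t 1 /\
  b >= (p D t * c D t + r D t * lam) / (c D t * de D t (c D t)).

Definition OmegaIII (D : Data) (t : nat) (lam b th : R) : Prop :=
  0 < b /\
  X_ D t lam / du D t (a_ D t b lam) <= th /\ th <= X_ D t lam / du D t 1.

Definition OmegaIV (D : Data) (t : nat) (lam b th : R) : Prop :=
  0 < b /\
  th < X_ D t lam / du D t (a_ D t b lam) /\
  th <= (b * c D t * de D t (c D t) + d D t * lam) / du D t 1.

Definition zII (D : Data) (t : nat) (lam : R) : R := 1 - a_ D t (beta D t) lam.
Definition xIII (D : Data) (t : nat) (lam : R) : R :=
  duinv D t (X_ D t lam / theta D t).
Definition zIII (D : Data) (t : nat) (lam : R) : R :=
  xIII D t lam - a_ D t (beta D t) lam.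

Definition eqIV (D : Data) (t : nat) (lam x : R) : Prop :=
  0 < x <= 1 /\
  theta D t * du D t x - beta D t * c D t * de D t (x * c D t) = d D t * lam.

(* the solution in (0,1] of the region-IV equation (1 if none exists) *)
Definition xIV (D : Data) (t : nat) (lam : R) : R :=
  match excluded_middle_informative (exists x, eqIV D t lam x) with
  | left H => proj1_sig (constructive_indefinite_description _ H)
  | right _ => 1
  end.

Definition W (D : Data) (t : nat) (lam : R) : R * R :=
  let b := beta D t in let th := theta D t in
  if excluded_middle_informative (OmegaI D t lam b th) then (1, 0)
  else if excluded_middle_informative (OmegaII D t lam b th) then (1, zII D t lam)
  else if excluded_middle_informative (OmegaIII D t lam b th)
       then (xIII D t lam, zIII D t lam)
  else (xIV D t lam, 0).

Definition proj0pi (D : Data) (x : R) : R := Rmax 0 (Rmin (piF D) x).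

(* lamseq k = \hat\lambda_{k+1} *)
Fixpoint lamseq (D : Data) (eta : nat -> R) (k : nat) : R :=
  match k with
  | O => 0
  | S k' =>
      let lam := lamseq D eta k' in
      let w := W D (S k') lam in
      proj0pi D (lam + eta (S k') * (htil D (S k') (fst w) (snd w) - q D))
  end.

Definition lamhat (D : Data) (eta : nat -> R) (t : nat) : R :=
  lamseq D eta (pred t).

Definition Xi (D : Data) : R := Rmax (Rabs (q D - dbar D - rbar D)) (q D).

Definition Psi (D : Data) (xs zs : nat -> R) : R :=
  let l := fun t => q D - htil D t (xs t) (zs t) in
  let lbar := sum1 (T D) l / INR (T D) in
  max1 (T D) (fun t => Rabs (INR t * lbar - sum1 t l)).

From Stdlib Require Import Reals Lra Lia ClassicalEpsilon.
Open Scope R_scope.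

(* Write l_t = q - h_t(x*_t, z*_t) for the budget slack of the optimal
   allocation.  The Lagrangian is affine in the price, so
   G = lambda* (sum l) - sum_t lamhat_t l_t.  Because lambda* minimizes
   lambda (sum l) over [0, pi] and every lamhat_t lies in [0, pi], the first
   term is at most the average  lbar * sum_t lamhat_t  with lbar = (sum l)/T.
   Writing S_t = t lbar - (l_1 + ... + l_t) (so S_0 = S_T = 0 and |S_t| <= Psi),
   summation by parts turns  lbar * sum lamhat - sum lamhat_t l_t  into
   - sum_t (lamhat_{t+1} - lamhat_t) S_t.  Finally, the projection onto [0, pi]
   is non-expansive and every decision W_t is feasible, so
   |lamhat_{t+1} - lamhat_t| <= eta_t |h_t - q| <= eta_t Xi. *)

Lemma sum1_ext n f g :
  (forall t, (1 <= t <= n)%nat -> f t = g t) -> sum1 n f = sum1 n g.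
Proof.
  induction n as [|n IH]; intros Hfg; simpl; [reflexivity|].
  rewrite IH by (intros; apply Hfg; lia); rewrite Hfg by lia; reflexivity.
Qed.

Lemma sum1_le n f g :
  (forall t, (1 <= t <= n)%nat -> f t <= g t) -> sum1 n f <= sum1 n g.
Proof.
  induction n as [|n IH]; intros Hfg; simpl; [lra|].
  assert (sum1 n f <= sum1 n g) by (apply IH; intros; apply Hfg; lia).
  assert (f (S n) <= g (S n)) by (apply Hfg; lia).
  lra.
Qed.

Lemma sum1_minus n f g : sum1 n (fun t => f t - g t) = sum1 n f - sum1 n g.
Proof. induction n as [|n IH]; simpl; [ring|]. rewrite IH; ring. Qed.

Lemma sum1_scal n a f : sum1 n (fun t => a * f t) = a * sum1 n f.
Proof. induction n as [|n IH]; simpl; [ring|]. rewrite IH; ring. Qed.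

Lemma sum1_const n a : sum1 n (fun _ => a) = INR n * a.
Proof. induction n as [|n IH]; simpl sum1; [simpl; ring|]. rewrite IH, S_INR; ring. Qed.

Lemma sum1_by_parts (f g : nat -> R) n :
  sum1 n (fun t => f t * (g t - g (pred t)))
  + sum1 n (fun t => (f (S t) - f t) * g t)
  = f (S n) * g n - f 1%nat * g 0%nat.
Proof. induction n as [|n IH]; simpl in *; [ring|]. lra. Qed.

Lemma max1_ge n f t : (1 <= t <= n)%nat -> f t <= max1 n f.
Proof.
  induction n as [|[|n] IH]; intros Ht; [lia| |].
  - replace t with 1%nat by lia; simpl; lra.
  - change (max1 (S (S n)) f) with (Rmax (max1 (S n) f) (f (S (S n)))).
    destruct (Nat.eq_dec t (S (S n))) as [->|Hne]; [apply Rmax_r|].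
    eapply Rle_trans; [apply IH; lia | apply Rmax_l].
Qed.

Definition cumdev (n : nat) (l : nat -> R) (t : nat) : R :=
  INR t * (sum1 n l / INR n) - sum1 t l.

(* Summation by parts against [cumdev]: since S_0 = S_n = 0 and
   S_t - S_{t-1} = lbar - l_t, the price-weighted slack is rewritten
   through the price increments. *)
Lemma weighted_sum_by_parts n (lam l : nat -> R) : (1 <= n)%nat ->
  (sum1 n l / INR n) * sum1 n lam - sum1 n (fun t => lam t * l t)
  = - sum1 n (fun t => (lam (S t) - lam t) * cumdev n l t).
Proof.
  intros Hn.
  assert (Hpos : 0 < INR n) by (apply lt_0_INR; lia).
  pose proof (sum1_by_parts lam (cumdev n l) n) as Hparts.
  assert (Hend : cumdev n l n = 0) by (unfold cumdev; field; lra).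
  assert (Hstart : cumdev n l 0 = 0) by (unfold cumdev; simpl; ring).
  assert (Hincr : sum1 n (fun t => lam t * (cumdev n l t - cumdev n l (pred t)))
                  = (sum1 n l / INR n) * sum1 n lam - sum1 n (fun t => lam t * l t)).
  { rewrite <- sum1_scal, <- sum1_minus; apply sum1_ext; intros [|t] Ht; [lia|].
    unfold cumdev; simpl pred; rewrite S_INR; simpl sum1; ring. }
  rewrite Hend, Hstart in Hparts; lra.
Qed.

Lemma average_dominates n (lam l : nat -> R) (lstar : R) : (1 <= n)%nat ->
  (forall t, (1 <= t <= n)%nat -> lstar * sum1 n l <= lam t * sum1 n l) ->
  lstar * sum1 n l <= (sum1 n l / INR n) * sum1 n lam.
Proof.
  intros Hn Hdom.
  assert (Hpos : 0 < INR n) by (apply lt_0_INR; lia).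
  assert (Hsum : sum1 n (fun _ => lstar * sum1 n l)
                 <= sum1 n (fun t => sum1 n l * lam t)).
  { apply sum1_le; intros t Ht; rewrite Rmult_comm with (r1 := sum1 n l); auto. }
  rewrite sum1_const, sum1_scal in Hsum.
  apply Rmult_le_reg_l with (INR n); [exact Hpos|].
  replace (INR n * (sum1 n l / INR n * sum1 n lam))
    with (sum1 n l * sum1 n lam) by (field; lra).
  lra.
Qed.

Lemma price_regret_bound n (lam l eta : nat -> R) (lstar K P : R) :
  (1 <= n)%nat ->
  (forall t, (1 <= t <= n)%nat -> lstar * sum1 n l <= lam t * sum1 n l) ->
  (forall t, (1 <= t <= n)%nat -> Rabs (lam (S t) - lam t) <= K * eta t) ->
  (forall t, (1 <= t <= n)%nat -> Rabs (cumdev n l t) <= P) ->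
  lstar * sum1 n l - sum1 n (fun t => lam t * l t) <= K * P * sum1 n eta.
Proof.
  intros Hn Hdom Hstep Hdev.
  pose proof (average_dominates n lam l lstar Hn Hdom) as Havg.
  pose proof (weighted_sum_by_parts n lam l Hn) as Hparts.
  assert (Hterm : sum1 n (fun t => - (K * P * eta t))
                  <= sum1 n (fun t => (lam (S t) - lam t) * cumdev n l t)).
  { apply sum1_le; intros t Ht.
    assert (Habs : Rabs ((lam (S t) - lam t) * cumdev n l t) <= K * eta t * P).
    { rewrite Rabs_mult; apply Rmult_le_compat; auto using Rabs_pos. }
    pose proof (Rle_abs (- ((lam (S t) - lam t) * cumdev n l t))) as Hle.
    rewrite Rabs_Ropp in Hle; lra. }
  replace (sum1 n (fun t => - (K * P * eta t))) with (- (K * P * sum1 n eta)) in Hterm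
    by (rewrite <- sum1_scal, <- (Rmult_1_l (sum1 n _)), Ropp_mult_distr_l, <- sum1_scal;
        apply sum1_ext; intros; ring).
  lra.
Qed.

Lemma le_div_iff a b c : 0 < c -> (a / c <= b <-> a <= b * c).
Proof.
  intros Hc; split; intros H.
  - apply Rmult_le_compat_r with (r := c) in H; [|lra].
    unfold Rdiv in H; rewrite Rmult_assoc, Rinv_l in H by lra; lra.
  - apply Rmult_le_reg_r with c; [exact Hc|].
    unfold Rdiv; rewrite Rmult_assoc, Rinv_l by lra; lra.
Qed.

Lemma div_le_iff a b c : 0 < c -> (b <= a / c <-> b * c <= a).
Proof.
  intros Hc; split; intros H.
  - apply Rmult_le_compat_r with (r := c) in H; [|lra].
    unfold Rdiv in H; rewrite Rmult_assoc, Rinv_l in H by lra; lra.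
  - apply Rmult_le_reg_r with c; [exact Hc|].
    unfold Rdiv; rewrite Rmult_assoc, Rinv_l by lra; lra.
Qed.

Section DecisionFeasibility.
Variables (D : Data) (t : nat) (lam : R).
Hypothesis Hlam : 0 <= lam.
Hypothesis Hd : 0 <= d D t.
Hypothesis Hr : 0 <= r D t.
Hypothesis Hc : 0 < c D t.
Hypothesis Hp : 0 < p D t.
Hypothesis Htheta : 0 < theta D t.
Hypothesis Hbeta : 0 < beta D t.
Hypothesis Hdu_pos : forall x, 0 < x -> 0 < du D t x.
Hypothesis Hdu_decr : forall x y, 0 < x -> x < y -> du D t y < du D t x.
Hypothesis Hduinv : forall y, 0 < y -> 0 < duinv D t y /\ du D t (duinv D t y) = y.
Hypothesis Hde_nonneg : forall x, 0 <= x -> 0 <= de D t x.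
Hypothesis Hde_incr : forall x y, 0 <= x -> x < y -> de D t x < de D t y.
Hypothesis Hdeinv : forall y, 0 <= y -> 0 <= deinv D t y /\ de D t (deinv D t y) = y.

Lemma marginal_cost_nonneg : 0 <= p D t * c D t + r D t * lam.
Proof. assert (0 < p D t * c D t) by nra; nra. Qed.

Lemma X_pos : 0 < X_ D t lam.
Proof. unfold X_; nra. Qed.

Lemma de_at_c_pos : 0 < de D t (c D t).
Proof. pose proof (Hde_nonneg 0 (Rle_refl 0)); pose proof (Hde_incr 0 (c D t)); lra. Qed.

Lemma a_nonneg : 0 <= a_ D t (beta D t) lam.
Proof.
  pose proof marginal_cost_nonneg.
  unfold a_; apply Rmult_le_pos; [left; apply Rinv_0_lt_compat; lra|].
  apply Hdeinv; apply Rmult_le_pos; [lra|].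
  left; apply Rinv_0_lt_compat; nra.
Qed.

Lemma a_le_1_regionII :
  OmegaII D t lam (beta D t) (theta D t) -> a_ D t (beta D t) lam <= 1.
Proof.
  intros [_ [_ Hge]]; apply Rge_le in Hge.
  pose proof marginal_cost_nonneg; pose proof de_at_c_pos.
  set (N := p D t * c D t + r D t * lam) in *.
  set (y := N / (beta D t * c D t)).
  assert (Hy0 : 0 <= y) by (apply Rmult_le_pos; [lra|]; left; apply Rinv_0_lt_compat; nra).
  assert (Hy : y <= de D t (c D t)).
  { apply le_div_iff in Hge; [|nra]; apply le_div_iff; [nra|]; nra. }
  assert (Hinv : deinv D t y <= c D t).
  { destruct (Rle_lt_dec (deinv D t y) (c D t)) as [|Hlt]; [assumption|].
    destruct (Hdeinv y Hy0) as [Hd0 Hdy].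
    pose proof (Hde_incr (c D t) (deinv D t y) (Rlt_le _ _ Hc) Hlt); lra. }
  unfold a_; fold N y.
  apply Rmult_le_reg_l with (c D t); [exact Hc|].
  rewrite <- Rmult_assoc, Rinv_r by lra; lra.
Qed.

Lemma xIII_bounds :
  OmegaIII D t lam (beta D t) (theta D t) ->
  a_ D t (beta D t) lam <= xIII D t lam <= 1.
Proof.
  intros [_ [Hlow Hhigh]].
  pose proof X_pos.
  set (a := a_ D t (beta D t) lam) in *.
  set (y := X_ D t lam / theta D t).
  assert (Hy : 0 < y) by (apply Rdiv_lt_0_compat; lra).
  destruct (Hduinv y Hy) as [Hx0 Hxy].
  unfold xIII; fold y; split.
  - destruct (Rle_lt_dec a (duinv D t y)) as [|Hlt]; [assumption|].
    assert (Ha : 0 < du D t a) by (apply Hdu_pos; lra).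
    apply le_div_iff in Hlow; [|exact Ha].
    assert (y <= du D t a) by (apply le_div_iff; [exact Htheta|]; nra).
    pose proof (Hdu_decr (duinv D t y) a Hx0 Hlt); lra.
  - destruct (Rle_lt_dec (duinv D t y) 1) as [|Hlt]; [assumption|].
    assert (H1 : 0 < du D t 1) by (apply Hdu_pos; lra).
    apply div_le_iff in Hhigh; [|exact H1].
    assert (du D t 1 <= y) by (apply div_le_iff; [exact Htheta|]; nra).
    pose proof (Hdu_decr 1 (duinv D t y) Rlt_0_1 Hlt); lra.
Qed.

Lemma xIV_bounds : 0 <= xIV D t lam <= 1.
Proof.
  unfold xIV; destruct (excluded_middle_informative _) as [Hex|]; [|lra].
  destruct (proj2_sig (constructive_indefinite_description _ Hex)) as [Hx _]; lra.
Qed.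

Lemma W_feasible_at :
  0 <= snd (W D t lam) <= fst (W D t lam) /\ fst (W D t lam) <= 1.
Proof.
  pose proof a_nonneg.
  unfold W.
  destruct (excluded_middle_informative _) as [_|_]; [simpl; lra|].
  destruct (excluded_middle_informative _) as [HII|_].
  { pose proof (a_le_1_regionII HII); simpl; unfold zII; lra. }
  destruct (excluded_middle_informative _) as [HIII|_].
  { pose proof (xIII_bounds HIII); simpl; unfold zIII; lra. }
  pose proof xIV_bounds; simpl; lra.
Qed.

End DecisionFeasibility.

Lemma W_feasible D t lam : Assumptions D -> (1 <= t <= T D)%nat -> 0 <= lam ->
  0 <= snd (W D t lam) <= fst (W D t lam) /\ fst (W D t lam) <= 1.
Proof.
  intros (_ & _ & _ & _ & _ & Hall) Ht Hlam.
  destruct (Hall t Ht) as ([Hd _] & [Hr _] & Hc & Hp & Hth & Hb & _ & _ & _ & _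
    & Hdu1 & Hdu2 & Hdui & _ & _ & _ & _ & _ & Hde1 & Hde2 & Hdei & _).
  apply W_feasible_at; assumption.
Qed.

Lemma consumption_deviation_bound D t x z : Assumptions D -> (1 <= t <= T D)%nat ->
  0 <= z -> z <= x -> x <= 1 -> Rabs (htil D t x z - q D) <= Xi D.
Proof.
  intros (_ & _ & _ & _ & _ & Hall) Ht Hz Hzx Hx.
  destruct (Hall t Ht) as ([Hd Hdb] & [Hr Hrb] & _).
  assert (Hh : 0 <= htil D t x z <= dbar D + rbar D) by (unfold htil; nra).
  pose proof (Rmax_l (Rabs (q D - dbar D - rbar D)) (q D)).
  pose proof (Rmax_r (Rabs (q D - dbar D - rbar D)) (q D)).
  pose proof (Rle_abs (- (q D - dbar D - rbar D))).
  rewrite Rabs_Ropp in *.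
  unfold Xi; apply Rabs_le; lra.
Qed.

Lemma proj0pi_range D x : 0 < piF D -> 0 <= proj0pi D x <= piF D.
Proof. intros; unfold proj0pi, Rmax, Rmin; repeat destruct Rle_dec; lra. Qed.

Lemma proj0pi_step D a s : 0 <= a <= piF D -> Rabs (proj0pi D (a + s) - a) <= Rabs s.
Proof.
  intros; unfold proj0pi, Rmax, Rmin, Rabs; repeat destruct Rle_dec;
    repeat destruct Rcase_abs; lra.
Qed.

Lemma lamhat_range D eta t : 0 < piF D -> 0 <= lamhat D eta t <= piF D.
Proof.
  intros Hpi; unfold lamhat; destruct (pred t); simpl; [lra|].
  apply proj0pi_range, Hpi.
Qed.

Lemma lamhat_succ D eta t : (1 <= t)%nat ->
  lamhat D eta (S t) =
  proj0pi D (lamhat D eta t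
             + eta t * (htil D t (fst (W D t (lamhat D eta t)))
                                 (snd (W D t (lamhat D eta t))) - q D)).
Proof. intros Ht; destruct t as [|t]; [lia|]; reflexivity. Qed.

Lemma lamhat_increment_bound D eta t : Assumptions D ->
  (forall s, (1 <= s <= T D)%nat -> 0 < eta s) -> (1 <= t <= T D)%nat ->
  Rabs (lamhat D eta (S t) - lamhat D eta t) <= Xi D * eta t.
Proof.
  intros HA Heta Ht.
  assert (Hpi : 0 < piF D) by apply HA.
  pose proof (lamhat_range D eta t Hpi) as Hrange.
  pose proof (W_feasible D t (lamhat D eta t) HA Ht (proj1 Hrange)) as [Hz Hx].
  rewrite lamhat_succ by lia.
  eapply Rle_trans; [apply proj0pi_step, Hrange|].
  rewrite Rabs_mult, Rabs_pos_eq by (left; apply Heta, Ht).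
  rewrite Rmult_comm; apply Rmult_le_compat_r; [left; apply Heta, Ht|].
  apply consumption_deviation_bound; tauto.
Qed.

Definition slack (D : Data) (xs zs : nat -> R) (t : nat) : R :=
  q D - htil D t (xs t) (zs t).

Lemma Lag_sum_affine D xs zs lam :
  sum1 (T D) (fun t => Lag D t (xs t) (zs t) lam)
  = sum1 (T D) (fun t => ftil D t (xs t) (zs t)) + lam * sum1 (T D) (slack D xs zs).
Proof.
  rewrite <- sum1_scal.
  replace (sum1 (T D) (fun t => ftil D t (xs t) (zs t)))
    with (sum1 (T D) (fun t => Lag D t (xs t) (zs t) lam)
          - sum1 (T D) (fun t => lam * slack D xs zs t)) at 1
    by (rewrite <- sum1_minus; apply sum1_ext; intros; unfold Lag, slack; ring).
  ring.
Qed.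

Lemma Lag_gap_eq D xs zs lstar (lam : nat -> R) :
  sum1 (T D) (fun t => Lag D t (xs t) (zs t) lstar - Lag D t (xs t) (zs t) (lam t))
  = lstar * sum1 (T D) (slack D xs zs)
    - sum1 (T D) (fun t => lam t * slack D xs zs t).
Proof.
  rewrite <- sum1_scal, <- sum1_minus; apply sum1_ext; intros; unfold Lag, slack; ring.
Qed.

Theorem mainTheorem9 (D : Data) (eta : nat -> R) (xs zs : nat -> R) (lamstar : R) :
  Assumptions D ->
  (forall t, (1 <= t <= T D)%nat -> 0 < eta t) ->
  is_maximizer D xs zs ->
  0 <= lamstar <= piF D ->
  (forall lam, 0 <= lam <= piF D ->
     sum1 (T D) (fun t => Lag D t (xs t) (zs t) lamstar)
     <= sum1 (T D) (fun t => Lag D t (xs t) (zs t) lam)) ->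
  sum1 (T D) (fun t => Lag D t (xs t) (zs t) lamstar
                       - Lag D t (xs t) (zs t) (lamhat D eta t))
  <= Xi D * Psi D xs zs * sum1 (T D) eta.
Proof.
  intros HA Heta _ _ Hopt.
  assert (HT : (1 <= T D)%nat) by apply HA.
  assert (Hpi : 0 < piF D) by apply HA.
  rewrite Lag_gap_eq.
  apply price_regret_bound; [exact HT | | |].
  - intros t _.
    pose proof (Hopt (lamhat D eta t) (lamhat_range D eta t Hpi)) as Hle.
    rewrite !Lag_sum_affine in Hle; lra.
  - intros t Ht; apply lamhat_increment_bound; assumption.
  - intros t Ht.
    exact (max1_ge (T D) (fun s => Rabs (cumdev (T D) (slack D xs zs) s)) t Ht).
Qed.
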